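(* Let $j\in\mathbb{N}$, $1\le r\le\infty$ and $s<j-\frac12$. Then for any $T>0$ the flow map $S:\hat H^s_r(\mathbb{T})\times(-T,T)\to\hat H^s_r(\mathbb{T})$ of the periodic Cauchy problem $$i\partial_tu+(-1)^{j+1}\partial_x^{2j}u=iu^2\,\partial_x^{2j-1}\overline u$$ cannot be uniformly continuous on bounded sets.
   Context: $\mathbb{T}=\mathbb{R}/2\pi\mathbb{Z}$; $\|u\|_{\hat H^s_r(\mathbb{T})}=\|\langle k\rangle^s\hat u(k)\|_{\ell^{r'}_k(\mathbb{Z})}$ with $r'$ the Hölder conjugate of $r$. *)

From Stdlib Require Import Reals ZArith.
From Coquelicot Require Import Coquelicot.
Open Scope R_scope.

(** Positive-part power: x^y for x > 0, and 0 for x <= 0 (used with y > 0,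
    so that 0^y = 0 as it should; Stdlib's Rpower 0 y = 1). *)
Definition ppow (x y : R) : R := if Rlt_dec 0 x then Rpower x y else 0.

Definition jbr (s : R) (k : Z) : R := Rpower (1 + (IZR k)^2) (s / 2).

Definition conj_exp (r : Rbar) : Rbar :=
  match r with
  | Finite x => if Req_EM_T x 1 then p_infty else Finite (x / (x - 1))
  | p_infty => Finite 1
  | m_infty => Finite 1 (* irrelevant: r >= 1 is always assumed *)
  end.

Definition zsum (g : Z -> R) (n : nat) : R :=
  sum_f_R0 (fun i => g (Z.of_nat i - Z.of_nat n)%Z) (2 * n).

Definition lq_norm (q : Rbar) (a : Z -> C) : Rbar :=
  match q with
  | Finite p =>
      match Lim_seq (zsum (fun k => ppow (Cmod (a k)) p)) with
      | Finite sm => Finite (ppow sm (/ p))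
      | p_infty => p_infty
      | m_infty => Finite 0 (* impossible: the partial sums are >= 0 *)
      end
  | _ => Lub_Rbar (fun y => exists k : Z, y = Cmod (a k))
  end.

(** ||u||_{\hat H^s_r(T)} = || <k>^s \hat u(k) ||_{ell^{r'}_k(Z)},
    for u given by its Fourier coefficient sequence a = \hat u : Z -> C. *)
Definition hatH_norm (s : R) (r : Rbar) (a : Z -> C) : Rbar :=
  lq_norm (conj_exp r) (fun k => Cmult (RtoC (jbr s k)) (a k)).

Definition seq_sub (a b : Z -> C) : Z -> C := fun k => Cminus (a k) (b k).

(** Fourier coefficients on T = R / 2piZ:
    \hat f(k) = (1/2pi) int_0^{2pi} f(x) e^{-ikx} dx (real and imaginary parts). *)
Definition fourier (f : R -> C) (k : Z) : C :=
  ( / (2 * PI) * RInt (fun x => Re (f x) * cos (IZR k * x) + Im (f x) * sin (IZR k * x)) 0 (2 * PI),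
    / (2 * PI) * RInt (fun x => Im (f x) * cos (IZR k * x) - Re (f x) * sin (IZR k * x)) 0 (2 * PI)).

Definition dx (n : nat) (u : R -> R -> C) (t x : R) : C :=
  (Derive_n (fun y => Re (u t y)) n x, Derive_n (fun y => Im (u t y)) n x).
Definition dt (u : R -> R -> C) (t x : R) : C :=
  (Derive (fun tau => Re (u tau x)) t, Derive (fun tau => Im (u tau x)) t).

Definition classical_solution (j : nat) (T : R) (u : R -> R -> C) : Prop :=
  forall t, -T < t < T ->
    (forall x, u t (x + 2 * PI) = u t x) /\
    (forall n x, ex_derive_n (fun y => Re (u t y)) n x /\
                 ex_derive_n (fun y => Im (u t y)) n x) /\
    (forall x, ex_derive (fun tau => Re (u tau x)) t /\
               ex_derive (fun tau => Im (u tau x)) t) /\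
    (forall n x, continuous (fun p : R * R => Re (dx n u (fst p) (snd p))) (t, x) /\
                 continuous (fun p : R * R => Im (dx n u (fst p) (snd p))) (t, x)) /\
    (forall x, continuous (fun p : R * R => Re (dt u (fst p) (snd p))) (t, x) /\
               continuous (fun p : R * R => Im (dt u (fst p) (snd p))) (t, x)) /\
    (forall x,
       Cplus (Cmult Ci (dt u t x)) (Cmult (RtoC ((-1) ^ (j + 1))) (dx (2 * j) u t x))
       = Cmult Ci (Cmult (Cmult (u t x) (u t x)) (Cconj (dx (2 * j - 1) u t x)))).

Definition is_flow_map (j : nat) (T : R) (S : (Z -> C) -> R -> (Z -> C)) : Prop :=
  forall u, classical_solution j T u ->
    forall t, -T < t < T -> S (fourier (u 0)) t = fourier (u t).

Definition unif_cont_on_bounded (s : R) (r : Rbar) (T : R)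
    (S : (Z -> C) -> R -> (Z -> C)) : Prop :=
  forall M, 0 < M -> forall eps, 0 < eps -> exists delta, 0 < delta /\
    forall a b t t',
      Rbar_le (hatH_norm s r a) M -> Rbar_le (hatH_norm s r b) M ->
      -T < t < T -> -T < t' < T ->
      Rbar_lt (hatH_norm s r (seq_sub a b)) delta -> Rabs (t - t') < delta ->
      Rbar_lt (hatH_norm s r (seq_sub (S a t) (S b t'))) eps.

(* Plane waves u = A e^{i(N x - w t)} are exact solutions as soon as
   w = N^(2j) + (-1)^(j+1) A^2 N^(2j-1): the nonlinearity only shifts the frequency,
   by an amount proportional to A^2.  Take two such waves of wave number N whose
   \hat H^s_r norms are 1 and 1 + eta, i.e. amplitudes 1/<N>^s and (1 + eta)/<N>^s.
   Their data are eta apart, while their frequencies differ by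
   ((1 + eta)^2 - 1) N^(2j-1) / <N>^(2s), which is unbounded in N because s < j - 1/2.
   For N large they are therefore in antiphase at some time t in (-T, T), and then
   2 + eta apart, so the flow has no modulus of continuity on the ball of radius 3. *)

From Stdlib Require Import Reals ZArith Lra Lia FunctionalExtensionality.
From Coquelicot Require Import Coquelicot.
Open Scope R_scope.

Lemma sin_as_cos z : sin z = cos (z - PI / 2).
Proof. rewrite <- cos_shift, <- cos_neg; f_equal; ring. Qed.

Lemma cos_add_PI2 z : cos (z + PI / 2) = - sin z.
Proof. rewrite cos_plus, cos_PI2, sin_PI2; ring. Qed.

Lemma Derive_n_cos_affine (K N c : R) n y :
  Derive_n (fun y => K * cos (N * y + c)) n y = K * N ^ n * cos (N * y + c + INR n * (PI / 2)).
Proof.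
  revert y; induction n as [|n IH]; intros y; simpl Derive_n.
  - rewrite Rmult_0_l, Rplus_0_r; ring.
  - rewrite (Derive_ext _ _ y IH). apply is_derive_unique; auto_derive; [easy|].
    rewrite S_INR.
    replace (N * y + c + (INR n + 1) * (PI / 2)) with (N * y + c + INR n * (PI / 2) + PI / 2) by ring.
    rewrite cos_add_PI2; simpl; ring.
Qed.

Lemma Derive_n_sin_affine (K N c : R) n y :
  Derive_n (fun y => K * sin (N * y + c)) n y = K * N ^ n * sin (N * y + c + INR n * (PI / 2)).
Proof.
  rewrite (Derive_n_ext _ (fun y => K * cos (N * y + (c - PI / 2)))).
  - rewrite Derive_n_cos_affine, sin_as_cos. do 2 f_equal; ring.
  - intros z; rewrite sin_as_cos; do 2 f_equal; ring.
Qed.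

Lemma ex_derive_n_cos_affine (K N c : R) n y : ex_derive_n (fun y => K * cos (N * y + c)) n y.
Proof.
  destruct n as [|n]; [easy|]. simpl.
  apply (ex_derive_ext (fun z => K * N ^ n * cos (N * z + c + INR n * (PI / 2)))).
  - intros z; symmetry; apply Derive_n_cos_affine.
  - auto_derive; easy.
Qed.

Lemma ex_derive_n_sin_affine (K N c : R) n y : ex_derive_n (fun y => K * sin (N * y + c)) n y.
Proof.
  apply (ex_derive_n_ext (fun y => K * cos (N * y + (c - PI / 2)))).
  - intros z; rewrite sin_as_cos; do 2 f_equal; ring.
  - apply ex_derive_n_cos_affine.
Qed.

Lemma continuous_phase_cos (K N w c : R) (p : R * R) :
  continuous (fun q : R * R => K * cos (N * snd q - w * fst q + c)) p.
Proof.
  apply (continuous_mult (fun _ => K)); [apply continuous_const|].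
  apply (continuous_comp (fun q : R * R => N * snd q - w * fst q + c) cos); [|apply continuous_cos].
  apply (continuous_plus (fun q : R * R => N * snd q - w * fst q)); [|apply continuous_const].
  apply (continuous_minus (fun q : R * R => N * snd q) (fun q : R * R => w * fst q)).
  - apply (continuous_mult (fun _ => N)); [apply continuous_const | apply continuous_snd].
  - apply (continuous_mult (fun _ => w)); [apply continuous_const | apply continuous_fst].
Qed.

Lemma continuous_phase_sin (K N w c : R) (p : R * R) :
  continuous (fun q : R * R => K * sin (N * snd q - w * fst q + c)) p.
Proof.
  apply (continuous_ext (fun q : R * R => K * cos (N * snd q - w * fst q + (c - PI / 2)))).
  - intros q. rewrite sin_as_cos. do 2 f_equal. ring.
  - apply continuous_phase_cos.
Qed.

Lemma sin_add_IZR_2PI (m : Z) f : sin (IZR m * (2 * PI) + f) = sin f.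
Proof.
  destruct m as [|p|p]; simpl.
  - f_equal; ring.
  - rewrite <- (sin_period f (Pos.to_nat p)), INR_IZR_INZ, positive_nat_Z. f_equal; ring.
  - rewrite <- (sin_period _ (Pos.to_nat p)), INR_IZR_INZ, positive_nat_Z, <- Pos2Z.opp_pos, opp_IZR.
    f_equal; ring.
Qed.

Lemma RInt_cos_affine_period (m : Z) f A : m <> 0%Z ->
  RInt (fun x => A * cos (IZR m * x + f)) 0 (2 * PI) = 0.
Proof.
  intros Hm. apply not_0_IZR in Hm.
  rewrite (is_RInt_unique _ 0 (2 * PI) (A * sin (IZR m * (2 * PI) + f) / IZR m - A * sin (IZR m * 0 + f) / IZR m)).
  - rewrite sin_add_IZR_2PI, Rmult_0_r, Rplus_0_l; apply Rminus_diag.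
  - apply (is_RInt_derive (fun x => A * sin (IZR m * x + f) / IZR m)).
    + intros x _. auto_derive; [easy|]. field; exact Hm.
    + intros x _. apply (@ex_derive_continuous R_AbsRing R_NormedModule). auto_derive; easy.
Qed.

Lemma RInt_sin_affine_period (m : Z) f A : m <> 0%Z ->
  RInt (fun x => A * sin (IZR m * x + f)) 0 (2 * PI) = 0.
Proof.
  intros Hm. rewrite <- (RInt_cos_affine_period m (f - PI / 2) A Hm) at 2.
  apply RInt_ext; intros x _. rewrite sin_as_cos; do 2 f_equal; ring.
Qed.

Definition polar (A theta : R) : C := (A * cos theta, A * sin theta).

Lemma Cmod_polar A theta : Cmod (polar A theta) = Rabs A.
Proof.
  unfold Cmod, polar; simpl. rewrite <- sqrt_Rsqr_abs. f_equal.
  pose proof (sin2_cos2 theta) as H. unfold Rsqr in *.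
  transitivity (A * A * (sin theta * sin theta + cos theta * cos theta)); [ring | rewrite H; ring].
Qed.

Lemma Cminus_polar a b theta : Cminus (polar a theta) (polar b theta) = polar (a - b) theta.
Proof. unfold Cminus, Cplus, Copp, polar; simpl. f_equal; ring. Qed.

Lemma polar_add_PI A theta : polar A (theta + PI) = polar (- A) theta.
Proof. unfold polar. rewrite neg_cos, neg_sin. f_equal; ring. Qed.

Lemma polar_add_nat_PI A theta k : polar A (theta + INR k * PI) = polar ((-1) ^ k * A) theta.
Proof.
  revert A; induction k as [|k IH]; intros A.
  - simpl. rewrite Rmult_0_l, Rplus_0_r, Rmult_1_l. reflexivity.
  - rewrite S_INR. replace (theta + (INR k + 1) * PI) with (theta + INR k * PI + PI) by ring.
    rewrite polar_add_PI, IH. simpl. f_equal; ring.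
Qed.

Lemma polar_sub_PI2 A theta : polar A (theta - PI / 2) = (A * sin theta, - (A * cos theta)).
Proof.
  unfold polar. rewrite cos_minus, sin_minus, cos_PI2, sin_PI2. f_equal; ring.
Qed.

Definition plane_wave (A N w : R) : R -> R -> C := fun t x => polar A (N * x - w * t).

Lemma dx_plane_wave A N w n t x :
  dx n (plane_wave A N w) t x = polar (A * N ^ n) (N * x - w * t + INR n * (PI / 2)).
Proof.
  unfold dx, plane_wave, polar, Re, Im, Rminus; simpl.
  rewrite Derive_n_cos_affine, Derive_n_sin_affine. reflexivity.
Qed.

Lemma dt_plane_wave A N w t x :
  dt (plane_wave A N w) t x = polar (A * w) (N * x - w * t - PI / 2).
Proof.
  rewrite polar_sub_PI2. unfold dt, plane_wave, polar, Re, Im; simpl.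
  (* auto_derive states these equalities in R_AbsRing, where ring does not apply. *)
  f_equal; apply is_derive_unique; auto_derive; try easy;
    match goal with |- ?a = ?b => change (@eq R a b) end; unfold Rminus; ring.
Qed.

Definition dispersion (j : nat) (A N : R) : R :=
  N ^ (2 * j) + (-1) ^ (j + 1) * A ^ 2 * N ^ (2 * j - 1).

Lemma plane_wave_equation j A N t x : (1 <= j)%nat ->
  let u := plane_wave A N (dispersion j A N) in
  Cplus (Cmult Ci (dt u t x)) (Cmult (RtoC ((-1) ^ (j + 1))) (dx (2 * j) u t x))
  = Cmult Ci (Cmult (Cmult (u t x) (u t x)) (Cconj (dx (2 * j - 1) u t x))).
Proof.
  intros Hj u. unfold u. rewrite dt_plane_wave, !dx_plane_wave. unfold plane_wave.
  set (theta := N * x - dispersion j A N * t).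
  replace (INR (2 * j) * (PI / 2)) with (INR j * PI) by (rewrite mult_INR; simpl; field).
  replace (theta + INR (2 * j - 1) * (PI / 2)) with (theta - PI / 2 + INR j * PI)
    by (rewrite minus_INR, mult_INR by lia; simpl; field).
  rewrite !polar_add_nat_PI, !polar_sub_PI2.
  assert (Hsg : (-1) ^ j * (-1) ^ j = 1).
  { rewrite <- pow_add. replace (j + j)%nat with (2 * j)%nat by lia.
    rewrite pow_mult. replace ((-1) ^ 2) with 1 by ring. apply pow1. }
  assert (Hcs : cos theta ^ 2 + sin theta ^ 2 = 1).
  { rewrite <- !Rsqr_pow2, Rplus_comm. apply sin2_cos2. }
  assert (HN : N ^ (2 * j) = N * N ^ (2 * j - 1)).
  { rewrite tech_pow_Rmult. f_equal. lia. }
  unfold dispersion, polar, Cplus, Cmult, Cconj, Ci, RtoC; cbn [fst snd].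
  rewrite HN, pow_add, pow_1.
  set (sg := (-1) ^ j) in *. set (c := cos theta) in *. set (s := sin theta) in *.
  set (P := N ^ (2 * j - 1)).
  f_equal; apply Rminus_diag_uniq.
  - transitivity (A * N * P * c * (1 - sg * sg) + A ^ 3 * P * sg * c * (c ^ 2 + s ^ 2 - 1));
      [ring | rewrite Hsg, Hcs; ring].
  - transitivity (A * N * P * s * (1 - sg * sg) + A ^ 3 * P * sg * s * (c ^ 2 + s ^ 2 - 1));
      [ring | rewrite Hsg, Hcs; ring].
Qed.

Lemma plane_wave_solution j T A n : (1 <= j)%nat ->
  classical_solution j T (plane_wave A (INR n) (dispersion j A (INR n))).
Proof.
  intros Hj t _. set (N := INR n). set (w := dispersion j A N).
  split; [|split; [|split; [|split; [|split]]]].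
  - intros x. unfold plane_wave, polar.
    replace (N * (x + 2 * PI) - w * t) with (N * x - w * t + 2 * INR n * PI) by (unfold N; ring).
    rewrite cos_period, sin_period. reflexivity.
  - intros k x. unfold plane_wave, polar, Re, Im, Rminus; simpl.
    split; [apply ex_derive_n_cos_affine | apply ex_derive_n_sin_affine].
  - intros x. unfold plane_wave, polar, Re, Im; simpl. split; auto_derive; easy.
  - intros k x. split.
    + apply (continuous_ext (fun q : R * R => A * N ^ k * cos (N * snd q - w * fst q + INR k * (PI / 2)))).
      { intros q. rewrite dx_plane_wave. reflexivity. }
      apply continuous_phase_cos.
    + apply (continuous_ext (fun q : R * R => A * N ^ k * sin (N * snd q - w * fst q + INR k * (PI / 2)))).
      { intros q. rewrite dx_plane_wave. reflexivity. }
      apply continuous_phase_sin.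
  - intros x. split.
    + apply (continuous_ext (fun q : R * R => A * w * cos (N * snd q - w * fst q + - (PI / 2)))).
      { intros q. rewrite dt_plane_wave. reflexivity. }
      apply continuous_phase_cos.
    + apply (continuous_ext (fun q : R * R => A * w * sin (N * snd q - w * fst q + - (PI / 2)))).
      { intros q. rewrite dt_plane_wave. reflexivity. }
      apply continuous_phase_sin.
  - intros x. apply plane_wave_equation, Hj.
Qed.

Definition mode (n : nat) (c : C) : Z -> C :=
  fun k => if Z.eq_dec k (Z.of_nat n) then c else 0%C.

Lemma fourier_plane_wave A n w t :
  fourier (plane_wave A (INR n) w t) = mode n (polar A (- (w * t))).
Proof.
  apply functional_extensionality; intros k.
  unfold fourier, plane_wave, polar, mode, Re, Im; cbn [fst snd].
  set (theta := fun x => INR n * x - w * t).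
  assert (Hfreq : forall x, theta x - IZR k * x = IZR (Z.of_nat n - k) * x + - (w * t)).
  { intros x. unfold theta. rewrite minus_IZR, <- INR_IZR_INZ. ring. }
  assert (Hre : forall x, A * cos (theta x) * cos (IZR k * x) + A * sin (theta x) * sin (IZR k * x)
                          = A * cos (IZR (Z.of_nat n - k) * x + - (w * t))).
  { intros x. rewrite <- Hfreq, cos_minus. ring. }
  assert (Him : forall x, A * sin (theta x) * cos (IZR k * x) - A * cos (theta x) * sin (IZR k * x)
                          = A * sin (IZR (Z.of_nat n - k) * x + - (w * t))).
  { intros x. rewrite <- Hfreq, sin_minus. ring. }
  rewrite (RInt_ext _ _ _ _ (fun x _ => Hre x)), (RInt_ext _ _ _ _ (fun x _ => Him x)).
  destruct (Z.eq_dec k (Z.of_nat n)) as [->|Hk].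
  - rewrite Z.sub_diag.
    rewrite (RInt_ext _ (fun _ => A * cos (- (w * t)))),
      (RInt_ext (fun x => A * sin (0 * x + - (w * t))) (fun _ => A * sin (- (w * t)))), !RInt_const.
    2, 3: intros x _; rewrite Rmult_0_l, Rplus_0_l; reflexivity.
    unfold scal; simpl; unfold mult; simpl. pose proof PI_RGT_0. f_equal; field; lra.
  - rewrite RInt_cos_affine_period, RInt_sin_affine_period by lia.
    rewrite !Rmult_0_r. reflexivity.
Qed.

Lemma seq_sub_mode n a b : seq_sub (mode n a) (mode n b) = mode n (Cminus a b).
Proof.
  apply functional_extensionality; intros k. unfold seq_sub, mode.
  destruct (Z.eq_dec k (Z.of_nat n)); [reflexivity|].
  unfold Cminus, Cplus, Copp, RtoC; simpl. f_equal; ring.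
Qed.

Lemma conj_exp_pos r : Rbar_le 1 r -> Rbar_lt 0 (conj_exp r).
Proof.
  destruct r as [x| |]; simpl; intros Hr; [|lra|easy].
  destruct (Req_EM_T x 1); simpl; [easy|].
  apply Rdiv_lt_0_compat; lra.
Qed.

Lemma sum_f_R0_indicator (K m : nat) v :
  sum_f_R0 (fun i => if Nat.eq_dec i K then v else 0) m = if le_dec K m then v else 0.
Proof.
  induction m as [|m IH]; cbn [sum_f_R0].
  - destruct (Nat.eq_dec 0 K), (le_dec K 0); try reflexivity; lia.
  - rewrite IH. destruct (Nat.eq_dec (S m) K), (le_dec K m), (le_dec K (S m)); try lia; ring.
Qed.

Lemma ppow_ppow_inv x p : 0 <= x -> 0 < p -> ppow (ppow x p) (/ p) = x.
Proof.
  intros Hx Hp. unfold ppow.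
  destruct (Rlt_dec 0 x) as [Hx'|Hx'].
  - destruct (Rlt_dec 0 (Rpower x p)) as [H|H].
    + rewrite Rpower_mult, Rinv_r, Rpower_1 by lra. reflexivity.
    + exfalso. apply H, exp_pos.
  - destruct (Rlt_dec 0 0); lra.
Qed.

Lemma lq_norm_mode q n c : Rbar_lt 0 q -> lq_norm q (mode n c) = Finite (Cmod c).
Proof.
  destruct q as [p| |]; simpl; intros Hq; try easy.
  - rewrite (Lim_seq_ext_loc _ (fun _ => ppow (Cmod c) p)).
    + rewrite Lim_seq_const, ppow_ppow_inv by (apply Cmod_ge_0 || exact Hq). reflexivity.
    + exists n. intros m Hm. unfold zsum.
      rewrite (sum_eq _ (fun i => if Nat.eq_dec i (m + n) then ppow (Cmod c) p else 0)).
      * rewrite sum_f_R0_indicator. destruct (le_dec (m + n) (2 * m)); [reflexivity | lia].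
      * intros i _. unfold mode.
        destruct (Z.eq_dec (Z.of_nat i - Z.of_nat m) (Z.of_nat n)), (Nat.eq_dec i (m + n));
          try lia; [reflexivity|].
        rewrite Cmod_0. unfold ppow. destruct (Rlt_dec 0 0); lra.
  - apply is_lub_Rbar_unique. split.
    + intros y [k ->]. unfold mode. destruct (Z.eq_dec k (Z.of_nat n)); simpl; [lra|].
      rewrite Cmod_0. apply Cmod_ge_0.
    + intros b Hb. apply Hb. exists (Z.of_nat n). unfold mode.
      destruct (Z.eq_dec (Z.of_nat n) (Z.of_nat n)); [reflexivity | congruence].
Qed.

Lemma hatH_norm_mode s r n c : Rbar_le 1 r ->
  hatH_norm s r (mode n c) = Finite (jbr s (Z.of_nat n) * Cmod c).
Proof.
  intros Hr. unfold hatH_norm.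
  replace (fun k => Cmult (RtoC (jbr s k)) (mode n c k)) with (mode n (Cmult (RtoC (jbr s (Z.of_nat n))) c)).
  - rewrite lq_norm_mode by (apply conj_exp_pos, Hr).
    rewrite Cmod_mult, Cmod_R, Rabs_pos_eq by (apply Rlt_le, exp_pos). reflexivity.
  - apply functional_extensionality; intros k. unfold mode.
    destruct (Z.eq_dec k (Z.of_nat n)) as [->|]; [reflexivity|].
    unfold Cmult, RtoC; simpl. f_equal; ring.
Qed.

Lemma flow_map_mode j T S n A t : (1 <= j)%nat -> is_flow_map j T S -> -T < t < T ->
  S (mode n (polar A 0)) t = mode n (polar A (- (dispersion j A (INR n) * t))).
Proof.
  intros Hj HS Ht.
  rewrite <- fourier_plane_wave, <- Ropp_0, <- (Rmult_0_r (dispersion j A (INR n))), <- fourier_plane_wave.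
  apply HS; [apply plane_wave_solution, Hj | exact Ht].
Qed.

Lemma jbr_nat_sq s n : jbr s (Z.of_nat n) ^ 2 = Rpower (1 + INR n ^ 2) s.
Proof.
  unfold jbr. rewrite <- INR_IZR_INZ, <- Rpower_pow, Rpower_mult by apply exp_pos.
  f_equal. simpl. field.
Qed.

Lemma mul_ln_1_plus_sq_le s y : 1 <= y -> s * ln (1 + y ^ 2) <= 2 * s * ln y + Rabs s * ln 2.
Proof.
  intros Hy.
  assert (Hsq : ln (y ^ 2) = 2 * ln y) by (rewrite ln_pow by lra; simpl; ring).
  assert (Hlo : 2 * ln y <= ln (1 + y ^ 2)).
  { rewrite <- Hsq. apply ln_le; [apply pow_lt; lra | lra]. }
  assert (Hhi : ln (1 + y ^ 2) <= ln 2 + 2 * ln y).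
  { rewrite <- Hsq, <- ln_mult by (try apply pow_lt; lra). apply ln_le; nra. }
  destruct (Rle_dec 0 s).
  - rewrite Rabs_pos_eq by lra. nra.
  - rewrite Rabs_left by lra. nra.
Qed.

Lemma exists_nat_pow_div_jbr_gt k s X : 2 * s < INR k ->
  exists n, (1 <= n)%nat /\ X < INR n ^ k / jbr s (Z.of_nat n) ^ 2.
Proof.
  intros Hk. set (e := INR k - 2 * s). set (X' := Rmax X 1).
  assert (HX' : 0 < X') by (unfold X'; pose proof (Rmax_r X 1); lra).
  set (L := (ln X' + Rabs s * ln 2) / e).
  destruct (nfloor_ex (Rmax 0 (exp L))) as [m Hm]; [apply Rmax_l|].
  exists (S m). split; [lia|].
  rewrite jbr_nat_sq. set (y := INR (S m)).
  assert (HyL : exp L < y) by (unfold y; rewrite S_INR; pose proof (Rmax_r 0 (exp L)); lra).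
  assert (Hy : 1 <= y) by (unfold y; rewrite S_INR; pose proof (pos_INR m); lra).
  assert (HlnL : L < ln y) by (rewrite <- (ln_exp L); apply ln_increasing; [apply exp_pos | exact HyL]).
  assert (HeL : e * L < e * ln y) by (apply Rmult_lt_compat_l; [unfold e; lra | exact HlnL]).
  unfold L in HeL. rewrite Rmult_div_assoc, Rmult_div_r in HeL by (unfold e; lra).
  pose proof (mul_ln_1_plus_sq_le s y Hy).
  apply Rle_lt_trans with X'; [apply Rmax_l|].
  unfold Rdiv. rewrite <- (exp_ln X'), <- Rpower_Ropp, <- (Rpower_pow k y) by lra.
  unfold Rpower. rewrite <- exp_plus. apply exp_increasing.
  unfold e in HeL. nra.
Qed.

Lemma dispersion_sub j A1 A2 N :
  dispersion j A2 N - dispersion j A1 N = (-1) ^ (j + 1) * (A2 ^ 2 - A1 ^ 2) * N ^ (2 * j - 1).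
Proof. unfold dispersion. ring. Qed.

Lemma exists_antiphase_time j s T a1 a2 : (1 <= j)%nat -> s < INR j - / 2 -> 0 < T -> a1 ^ 2 <> a2 ^ 2 ->
  exists n t, -T < t < T /\
    (dispersion j (a2 / jbr s (Z.of_nat n)) (INR n) - dispersion j (a1 / jbr s (Z.of_nat n)) (INR n)) * t = PI.
Proof.
  intros Hj Hs HT Ha.
  set (c := Rabs (a2 ^ 2 - a1 ^ 2)).
  assert (Hc : 0 < c) by (apply Rabs_pos_lt; lra).
  destruct (exists_nat_pow_div_jbr_gt (2 * j - 1) s (PI / (T * c))) as [n [Hn Hbig]].
  { rewrite minus_INR, mult_INR by lia. simpl. lra. }
  set (rho := jbr s (Z.of_nat n)) in *.
  assert (Hrho : 0 < rho) by apply exp_pos.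
  set (D := dispersion j (a2 / rho) (INR n) - dispersion j (a1 / rho) (INR n)).
  assert (HD : Rabs D = c * (INR n ^ (2 * j - 1) / rho ^ 2)).
  { unfold D. rewrite dispersion_sub, !Rabs_mult, pow_1_abs, Rmult_1_l.
    rewrite (Rabs_pos_eq (INR n ^ _)) by (apply pow_le, pos_INR).
    unfold c. replace ((a2 / rho) ^ 2 - (a1 / rho) ^ 2) with ((a2 ^ 2 - a1 ^ 2) / rho ^ 2) by (field; lra).
    rewrite Rabs_div, (Rabs_pos_eq (rho ^ 2)) by (try apply pow_le; nra). field. nra. }
  assert (HDT : PI < T * Rabs D).
  { rewrite HD. apply (Rmult_lt_compat_l (T * c)) in Hbig; [|nra].
    replace (T * c * (PI / (T * c))) with PI in Hbig by (field; lra). nra. }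
  assert (HD0 : D <> 0) by (intros E; rewrite E, Rabs_R0 in HDT; pose proof PI_RGT_0; lra).
  exists n, (PI / D). split.
  - enough (Ht : Rabs (PI / D) < T) by (apply Rabs_def2 in Ht; lra).
    unfold Rdiv. rewrite Rabs_mult, Rabs_inv, Rabs_pos_eq by (left; apply PI_RGT_0).
    apply (Rmult_lt_reg_r (Rabs D)); [apply Rabs_pos_lt, HD0|].
    rewrite Rmult_assoc, Rinv_l by (apply Rabs_no_R0, HD0). lra.
  - change (D * (PI / D) = PI). field. exact HD0.
Qed.

Theorem proposition6p2 (j : nat) (r : Rbar) (s : R) :
  (1 <= j)%nat -> Rbar_le (Finite 1) r -> s < INR j - / 2 ->
  forall T : R, 0 < T ->
  forall S : (Z -> C) -> R -> (Z -> C),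
    is_flow_map j T S -> ~ unif_cont_on_bounded s r T S.
Proof.
  intros Hj Hr Hs T HT S HS Hunif.
  destruct (Hunif 3 ltac:(lra) 1 ltac:(lra)) as [delta [Hdelta Hclose]].
  set (eta := Rmin (delta / 2) 1).
  assert (Heta : 0 < eta < delta /\ eta <= 1).
  { pose proof (Rmin_l (delta / 2) 1). pose proof (Rmin_pos (delta / 2) 1).
    unfold eta in *. split; [lra | apply Rmin_r]. }
  destruct (exists_antiphase_time j s T 1 (1 + eta)) as [n [t [Ht Hanti]]]; try assumption; [nra|].
  set (rho := jbr s (Z.of_nat n)) in *.
  assert (Hrho : 0 < rho) by apply exp_pos.
  specialize (Hclose (mode n (polar (1 / rho) 0)) (mode n (polar ((1 + eta) / rho) 0)) t t).
  rewrite !(flow_map_mode j T S) in Hclose by assumption.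
  (* at time t the two waves are in antiphase *)
  replace (- (dispersion j (1 / rho) (INR n) * t)) with (- (dispersion j ((1 + eta) / rho) (INR n) * t) + PI)
    in Hclose by (rewrite Rmult_minus_distr_r in Hanti; lra).
  rewrite polar_add_PI, !seq_sub_mode, !Cminus_polar, !hatH_norm_mode, !Cmod_polar in Hclose by exact Hr.
  fold rho in Hclose. simpl in Hclose.
  assert (Hscale : forall a, rho * Rabs (a / rho) = Rabs a).
  { intros a. unfold Rdiv. rewrite Rabs_mult, Rabs_inv, (Rabs_pos_eq rho) by lra. field. lra. }
  replace (- (1 / rho) - (1 + eta) / rho) with (- (2 + eta) / rho) in Hclose by (field; lra).
  replace (1 / rho - (1 + eta) / rho) with (- eta / rho) in Hclose by (field; lra).
  rewrite !Hscale, Rminus_diag, Rabs_R0, !Rabs_Ropp, !Rabs_pos_eq in Hclose by lra.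
  enough (2 + eta < 1) by lra.
  apply Hclose; lra.
Qed.
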